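(* For each type below, let $G_X$ be the group with generators $a,b,c$ and the listed relations, and let $A,B,C\in\mathrm{GL}(2,\mathbb{C})$ be as listed. Then (i) $a\mapsto A$, $b\mapsto B$, $c\mapsto C$ induces a group homomorphism $\rho:G_X\to\mathrm{GL}(2,\mathbb{C})$, and (ii) the image $\rho(G_X)$ is not abelian if $l^2\neq1$. 1. $\mathrm{B_{ii}}$ (relations $ababab=bababa,\ bc=ab,\ ac=ca$): $A=u\begin{pmatrix}1&l^2\\0&1\end{pmatrix}$, $B=v\begin{pmatrix}l&0\\0&l^{-1}\end{pmatrix}$, $C=u\begin{pmatrix}1&1\\0&1\end{pmatrix}$, where $l^6=1$ and $u,v\in\mathbb{C}^\times$. 2. $\mathrm{B_{vi}}$ (relations $aba=bab,\ aca=bac,\ acaca=cacac$): $A=u\begin{pmatrix}l&0\\0&l^{-1}\end{pmatrix}$, $B=u\begin{pmatrix}\beta_1&\beta_2\\\beta_3&\beta_4\end{pmatrix}$, $C=u\begin{pmatrix}\gamma_1&\gamma_2\\\gamma_3&\gamma_4\end{pmatrix}$, where $l^{10}=1$, $l^2\neq1$, $u\in\mathbb{C}^\times$, $\beta_1=-\frac{1}{l(l^2-1)}$, $\beta_2\beta_3=\frac{-l^4+l^2-1}{(1-l^2)^2}$, $\beta_4=\frac{l^3}{l^2-1}$, $\gamma_1=-l^4\beta_1$, $\gamma_2=-\beta_2/l^4$, $\gamma_3=-l^4\beta_3$, $\gamma_4=-\beta_4/l^4$. 3. $\mathrm{H_{ii}}$ (relations $abab=baba,\ aca=bac,\ acaca=cacac$):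 $A=u\begin{pmatrix}l&0\\0&l^{-1}\end{pmatrix}$, $B=u\begin{pmatrix}\beta_1&\beta_2\\\beta_3&\beta_4\end{pmatrix}$, $C=u\begin{pmatrix}\gamma_1&\gamma_2\\\gamma_3&\gamma_4\end{pmatrix}$, $u\in\mathbb{C}^\times$, with one of: (i) $l^2+l+1=0$, $3\gamma_1^2+3\gamma_1+2=0$, $\beta_1=\frac{l-1}{3}$, $\beta_4=\frac{-l-2}{3}$, $\beta_2\beta_3=-\frac23$, $\gamma_2=\frac{-\beta_2(l+2)}{3\gamma_1}$, $\gamma_3=\frac{\gamma_1(1-l)}{3\beta_2}$, $\gamma_4=\frac{2}{3\gamma_1}$; or (ii) $l^2-l+1=0$, $3\gamma_1^2-3\gamma_1+2=0$, $\beta_1=\frac{l+1}{3}$, $\beta_4=\frac{-l+2}{3}$, $\beta_2\beta_3=-\frac23$, $\gamma_2=\frac{\beta_2(-l+2)}{3\gamma_1}$, $\gamma_3=\frac{-\gamma_1(l+1)}{3\beta_2}$, $\gamma_4=\frac{2}{3\gamma_1}$. 4. $\mathrm{H_{iii}}$ (relations $aba=bab,\ bcba=cbac,\ cba=acb$): $A=u\begin{pmatrix}l&0\\0&l^{-1}\end{pmatrix}$, $B=u\begin{pmatrix}\beta_1&\beta_2\\\beta_3&\beta_4\end{pmatrix}$, $C=u\begin{pmatrix}\gamma_1&\gamma_2\\\gamma_3&\gamma_4\end{pmatrix}$, where $l^{10}=1$, $l^2\neq1$, $u\in\mathbb{C}^\times$, $\beta_1=-\frac{1}{l(l^2-1)}$,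 $\beta_2\beta_3=\frac{-l^4+l^2-1}{(l^2-1)^2}$, $\beta_4=\frac{l^3}{l^2-1}$, $\gamma_1=\beta_1$, $\gamma_2=\beta_2/l^4$, $\gamma_3=l^4\beta_3$, $\gamma_4=\beta_4$.
   Context: These groups $G_X$ are the fundamental groups of the complements of the corresponding Sekiguchi free divisors in $\mathbb{C}^3$, presented on Zariski–van Kampen generators $a,b,c$. Matrix entries of $B$ and $C$ are renamed $\beta_i,\gamma_i$ here (the paper calls them $a,b,c,d$ and $p,q,r,s$). *)

From mathcomp Require Import all_boot all_algebra complex.
From mathcomp Require Export reals.
Set Implicit Arguments. Unset Strict Implicit. Unset Printing Implicit Defensive.
Import GRing.Theory Num.Theory.
Local Open Scope ring_scope.

Definition mx2 {C : pzRingType} (a b c d : C) : 'M[C]_2 :=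
  \matrix_(i < 2, j < 2)
    if (i == 0 :> nat) then (if (j == 0 :> nat) then a else b)
    else (if (j == 0 :> nat) then c else d).

(* The subgroup of GL(2,C) generated by A, B, C (given they are invertible):
   the smallest set containing 1 and closed under right multiplication by
   A, B, C and their inverses. *)
Inductive gen3 {F : comUnitRingType} (A B C : 'M[F]_2) : 'M[F]_2 -> Prop :=
  | gen3_1 : gen3 A B C 1%:M
  | gen3_A X : gen3 A B C X -> gen3 A B C (X *m A)
  | gen3_B X : gen3 A B C X -> gen3 A B C (X *m B)
  | gen3_C X : gen3 A B C X -> gen3 A B C (X *m C)
  | gen3_Ai X : gen3 A B C X -> gen3 A B C (X *m invmx A)
  | gen3_Bi X : gen3 A B C X -> gen3 A B C (X *m invmx B)
  | gen3_Ci X : gen3 A B C X -> gen3 A B C (X *m invmx C).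

Definition nonabelian_image {F : comUnitRingType} (A B C : 'M[F]_2) : Prop :=
  exists X Y, gen3 A B C X /\ gen3 A B C Y /\ X *m Y <> Y *m X.

(* a |-> A, b |-> B, c |-> C induces a homomorphism G_X -> GL(2) (von Dyck):
   the matrices are invertible and satisfy the defining relations of G_X. *)
Definition rel_Bii {F : comUnitRingType} (A B C : 'M[F]_2) : Prop :=
  (A \in unitmx /\ B \in unitmx /\ C \in unitmx) /\
  [/\
      A *m B *m A *m B *m A *m B = B *m A *m B *m A *m B *m A,
      B *m C = A *m B &
      A *m C = C *m A].

Definition rel_Bvi {F : comUnitRingType} (A B C : 'M[F]_2) : Prop :=
  (A \in unitmx /\ B \in unitmx /\ C \in unitmx) /\
  [/\
      A *m B *m A = B *m A *m B,
      A *m C *m A = B *m A *m C &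
      A *m C *m A *m C *m A = C *m A *m C *m A *m C].

Definition rel_Hii {F : comUnitRingType} (A B C : 'M[F]_2) : Prop :=
  (A \in unitmx /\ B \in unitmx /\ C \in unitmx) /\
  [/\
      A *m B *m A *m B = B *m A *m B *m A,
      A *m C *m A = B *m A *m C &
      A *m C *m A *m C *m A = C *m A *m C *m A *m C].

Definition rel_Hiii {F : comUnitRingType} (A B C : 'M[F]_2) : Prop :=
  (A \in unitmx /\ B \in unitmx /\ C \in unitmx) /\
  [/\
      A *m B *m A = B *m A *m B,
      B *m C *m B *m A = C *m B *m A *m C &
      C *m B *m A = A *m C *m B].

From mathcomp Require Import all_boot all_algebra complex.
From mathcomp Require Import reals ring.
Set Implicit Arguments.
Unset Strict Implicit.
Unset Printing Implicit Defensive.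
Import GRing.Theory Num.Theory.
Local Open Scope ring_scope.

(* The two sides of every defining relation have the same length and the same
   number of b's, so the scalars u, v factor out and A, B, C may be taken in
   SL(2).  There the Cayley-Hamilton theorem gives X Y X = tr(XY) X + Y - tr(Y)
   when det X = 1; hence for X, Y of equal trace the relations XYX = YXY,
   (XY)^2 = (YX)^2 and XYXYX = YXYXY hold as soon as tr(XY) is 1, 0, resp. a
   root of s^2 - s - 1 (for tr(AC) in B_vi this is where l^10 = 1 enters), and
   (XY)^3 = (YX)^3 holds when (tr(XY)^2 - 1)(XY - YX) = 0.  In B_vi and H_iii
   the matrix C is a conjugate, C = A^-2 B^-1 A^2 resp. C = A^-2 B A^2, and the
   relations involving C follow from the braid relation of A and B by word
   manipulations valid in any ring, using for H_iii that A^5 is scalar.  The image is not abelian because A, resp. B in B_ii, is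
   diagonal with distinct eigenvalues l, l^-1 while the other matrix has a
   nonzero off-diagonal entry. *)

Section Mx2.
Variable R : pzRingType.
Implicit Types (a b c d e f g h : R) (X : 'M[R]_2).

Lemma mx2E X : X = mx2 (X 0 0) (X 0 1) (X 1 0) (X 1 1).
Proof.
apply/matrixP=> -[[|[|i]] Hi] -[[|[|j]] Hj] //;
  by rewrite !mxE /=; congr (X _ _); apply: val_inj.
Qed.

Lemma mx2_mul a b c d e f g h :
  mx2 a b c d *m mx2 e f g h =
  mx2 (a * e + b * g) (a * f + b * h) (c * e + d * g) (c * f + d * h).
Proof.
apply/matrixP=> i j; rewrite !mxE !big_ord_recr big_ord0 /= !mxE add0r.
by case: i => [[|[|i]] Hi] //; case: j => [[|[|j]] Hj].
Qed.

Lemma tr_mx2 a b c d : \tr (mx2 a b c d) = a + d.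
Proof. by rewrite /mxtrace !big_ord_recr big_ord0 /= !mxE add0r. Qed.

Lemma scalar_mx2 a : a%:M = mx2 a 0 0 a :> 'M[R]_2.
Proof. by apply/matrixP=> -[[|[|i]] Hi] -[[|[|j]] Hj]; rewrite !mxE. Qed.

Lemma scale_mx2 a b c d e : a *: mx2 b c d e = mx2 (a * b) (a * c) (a * d) (a * e).
Proof. by apply/matrixP=> -[[|[|i]] Hi] -[[|[|j]] Hj]; rewrite !mxE. Qed.

Lemma add_mx2 a b c d e f g h :
  mx2 a b c d + mx2 e f g h = mx2 (a + e) (b + f) (c + g) (d + h).
Proof. by apply/matrixP=> -[[|[|i]] Hi] -[[|[|j]] Hj]; rewrite !mxE. Qed.

Lemma opp_mx2 a b c d : - mx2 a b c d = mx2 (- a) (- b) (- c) (- d).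
Proof. by apply/matrixP=> -[[|[|i]] Hi] -[[|[|j]] Hj]; rewrite !mxE. Qed.

Lemma mx2_0 : 0 = mx2 0 0 0 0 :> 'M[R]_2.
Proof. by apply/matrixP=> -[[|[|i]] Hi] -[[|[|j]] Hj]; rewrite !mxE. Qed.

End Mx2.

Section SL2.
Variable R : comNzRingType.
Implicit Types (X Y : 'M[R]_2).

Lemma det_mx2 (a b c d : R) : \det (mx2 a b c d) = a * d - b * c.
Proof.
rewrite (expand_det_row _ ord0) !big_ord_recr big_ord0 /= add0r.
by rewrite /cofactor !mxE /= !det_mx11 !mxE /= expr0 expr1 mul1r mulN1r mulrN.
Qed.

Ltac mx2_ring X Y :=
  rewrite [X]mx2E [Y]mx2E ?mx2_mul ?tr_mx2 ?det_mx2;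
  rewrite ?scalar_mx2 ?scale_mx2 ?opp_mx2 ?add_mx2; congr mx2; ring.

Lemma expmx2_diag (a d : R) n : mx2 a 0 0 d ^+ n = mx2 (a ^+ n) 0 0 (d ^+ n).
Proof.
elim: n => [|n IHn]; first by rewrite !expr0 -scalar_mx2.
by rewrite exprS IHn -mulmxE mx2_mul !exprS; congr mx2; ring.
Qed.

Lemma mx2_Cayley_Hamilton X : X *m X = \tr X *: X - (\det X)%:M.
Proof. by mx2_ring X X. Qed.

Lemma mx2_sandwich X Y :
  X *m Y *m X = \tr (X *m Y) *: X + \det X *: Y - (\det X * \tr Y)%:M.
Proof. by mx2_ring X Y. Qed.

Lemma mx2_cube X :
  X *m X *m X = (\tr X ^+ 2 - \det X) *: X - (\tr X * \det X)%:M.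
Proof. by mx2_ring X X. Qed.

Lemma sandwich_SL2 X Y : \det X = 1 ->
  X *m Y *m X = \tr (X *m Y) *: X + Y - (\tr Y)%:M.
Proof. by move=> dX; rewrite mx2_sandwich dX scale1r mul1r. Qed.

Lemma tr_square_SL2 X : \det X = 1 -> \tr (X *m X) = \tr X ^+ 2 - 2.
Proof.
by move=> dX; rewrite mx2_Cayley_Hamilton dX linearB /= mxtraceZ mxtrace_scalar.
Qed.

Lemma braid3_mx2 X Y : \det X = 1 -> \det Y = 1 -> \tr X = \tr Y ->
  \tr (X *m Y) = 1 -> X *m Y *m X = Y *m X *m Y.
Proof.
move=> dX dY tXY s1; rewrite !sandwich_SL2 // (mxtrace_mulC Y) s1 tXY !scale1r.
by rewrite (addrC X).
Qed.

Lemma braid4_mx2 X Y : \tr (X *m Y) = 0 -> X *m Y *m X *m Y = Y *m X *m Y *m X.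
Proof.
move=> s0; rewrite -[X *m Y *m X *m Y]mulmxA -[Y *m X *m Y *m X]mulmxA.
by rewrite !mx2_Cayley_Hamilton (mxtrace_mulC Y) s0 !scale0r !det_mulmx mulrC.
Qed.

Lemma braid5_mx2 X Y : \det X = 1 -> \det Y = 1 -> \tr X = \tr Y ->
    \tr (X *m Y) ^+ 2 - \tr (X *m Y) - 1 = 0 ->
  X *m Y *m X *m Y *m X = Y *m X *m Y *m X *m Y.
Proof.
move=> dX dY tXY golden.
have dXY : \det (X *m Y) = 1 by rewrite det_mulmx dX dY mulr1.
have dYX : \det (Y *m X) = 1 by rewrite det_mulmx dX dY mulr1.
have -> : X *m Y *m X *m Y *m X = X *m (Y *m X *m Y) *m X by rewrite !mulmxA.
have -> : Y *m X *m Y *m X *m Y = Y *m (X *m Y *m X) *m Y by rewrite !mulmxA.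
rewrite (sandwich_SL2 (Y *m X *m Y) dX) (sandwich_SL2 (X *m Y *m X) dY) !mulmxA.
rewrite -[X *m Y *m X *m Y]mulmxA -[Y *m X *m Y *m X]mulmxA !tr_square_SL2 //.
rewrite (sandwich_SL2 _ dY) (sandwich_SL2 _ dX) (mxtrace_mulC Y X).
rewrite !linearD !linearN /= !mxtraceZ !mxtrace_scalar tXY.
have -> : \tr (X *m Y) ^+ 2 - 2 = \tr (X *m Y) - 1.
  by apply/eqP; rewrite -subr_eq0 -golden; apply/eqP; ring.
by move: (\tr (X *m Y)) (\tr Y) => s t; mx2_ring X Y.
Qed.

Lemma braid6_mx2 X Y :
    (\tr (X *m Y) ^+ 2 - \det (X *m Y)) *: (X *m Y - Y *m X) = 0 ->
  X *m Y *m X *m Y *m X *m Y = Y *m X *m Y *m X *m Y *m X.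
Proof.
move=> h; rewrite -[X *m Y *m X *m Y]mulmxA -[Y *m X *m Y *m X]mulmxA.
rewrite -[_ *m X *m Y]mulmxA -[_ *m Y *m X]mulmxA !mx2_cube (mxtrace_mulC Y).
by move/eqP: h; rewrite !det_mulmx (mulrC (\det Y)) scalerBr subr_eq0 => /eqP ->.
Qed.

End SL2.

Section BraidRelations.
Variables (R : unitRingType) (a b c : R).
Hypothesis braid : a * b * a = b * a * b.

(* Words are normalized to right-nested products ending in a tail x, so that
   each instance of [braidR] and of its analogues below performs one rewriting
   step at the position fixed by x. *)
Let braidR x : a * (b * (a * x)) = b * (a * (b * x)).
Proof. by rewrite !mulrA braid. Qed.

Lemma invsqconj_aca : b * a \is a GRing.unit -> b * (a * a) * c = a * a ->
  a * c * a = b * a * c.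
Proof.
move=> uba hc; apply: (mulrI uba).
have -> : b * a * (a * c * a) = a * a * a by rewrite !mulrA -(mulrA b a a) hc.
rewrite !mulrA -braid -(mulrA (a * b) a a) -(mulrA a b (a * a)).
by rewrite -(mulrA a (b * (a * a)) c) hc mulrA.
Qed.

Hypotheses (ua : a \is a GRing.unit) (hc : a * a * c = b * a * a).

Let hcR x : a * (a * (c * x)) = b * (a * (a * x)).
Proof. by rewrite !mulrA hc. Qed.

Let ua2 : a * a \is a GRing.unit.
Proof. by rewrite unitrMl. Qed.

Lemma sqconj_cba : c * b * a = a * c * b.
Proof.
apply: (mulrI ua2); rewrite -[LHS]mulr1 -[RHS]mulr1 -!mulrA.
by rewrite (hcR (b * (a * 1))) (hcR (b * 1)) (braidR 1) -(braidR (a * (b * 1))).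
Qed.

Hypothesis a5b : a ^+ 5 * b = b * a ^+ 5.

Let a5bR x : a * (a * (a * (a * (a * (b * x))))) = b * (a * (a * (a * (a * (a * x))))).
Proof. by move: a5b; rewrite !exprS expr0 mulr1 !mulrA => ->. Qed.

(* Left multiplication by a^5, which commutes with b and turns a^5 c into
   a^3 b a^2, makes both sides positive braid words, b a^3 b a^2 b and
   a b a^3 b a^2, which are equal in the braid monoid. *)
Lemma sqconj_bcb : b * c * b = a * b * c.
Proof.
have ua5 : a * (a * (a * (a * a))) \is a GRing.unit by rewrite !unitrMr.
apply: (mulrI ua5); rewrite -[LHS]mulr1 -[RHS]mulr1 -!mulrA.
rewrite a5bR (hcR (b * 1)) (a5bR (c * 1)) (hcR 1).
rewrite (braidR (a * (b * 1))) (braidR (b * (a * (b * 1)))).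
by rewrite -(braidR (a * (b * (b * (a * (b * 1)))))) -(braidR 1) -(braidR (a * 1)).
Qed.

Lemma sqconj_bcba : b * c * b * a = c * b * a * c.
Proof.
have cbaR x : c * (b * (a * x)) = a * (c * (b * x)).
  by rewrite !mulrA sqconj_cba.
have bcbR x : b * (c * (b * x)) = a * (b * (c * x)).
  by rewrite !mulrA sqconj_bcb.
apply: (mulrI ua2); rewrite -[LHS]mulr1 -[RHS]mulr1 -!mulrA.
rewrite (cbaR 1) (braidR (c * (b * 1))) (bcbR 1).
by rewrite (cbaR (c * 1)) (hcR (b * (c * 1))).
Qed.
End BraidRelations.

Lemma scalemxM (R : comNzRingType) m n p (u v : R)
    (X : 'M[R]_(m, n)) (Y : 'M[R]_(n, p)) :
  (u *: X) *m (v *: Y) = (u * v) *: (X *m Y).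
Proof. by rewrite -scalemxAl -scalemxAr scalerA. Qed.

(* Identities holding modulo polynomial relations P = 0, Q = 0 are checked by
   [field] after supplying the multipliers p, q: the quotients of a division of
   the (cleared) difference by P and Q. *)
Lemma eq_mod1 {R : pzRingType} (p : R) {P x y : R} :
  P = 0 -> x - y = p * P -> x = y.
Proof. by move=> P0; rewrite P0 mulr0 => /eqP; rewrite subr_eq0 => /eqP. Qed.
Arguments eq_mod1 {R} p {P x y}.

Lemma eq_mod2 {R : pzRingType} (p q : R) {P Q x y : R} :
  P = 0 -> Q = 0 -> x - y = p * P + q * Q -> x = y.
Proof. by move=> P0 Q0; rewrite Q0 mulr0 addr0; apply: eq_mod1. Qed.
Arguments eq_mod2 {R} p q {P Q x y}.

Section Representations.
Variable F : fieldType.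
Implicit Types (l u v : F) (A B C X Y : 'M[F]_2).

Lemma unitmx_SL2 X : \det X = 1 -> X \in unitmx.
Proof. by move=> dX; rewrite unitmxE dX unitr1. Qed.

Lemma det_diag_mx2 l : l != 0 -> \det (mx2 l 0 0 l^-1) = 1.
Proof. by move=> l0; rewrite det_mx2 mulfV // mul0r subr0. Qed.

Lemma rel_Bii_scale u v A B C : u != 0 -> v != 0 ->
  rel_Bii A B C -> rel_Bii (u *: A) (v *: B) (u *: C).
Proof.
move=> u0 v0 [[uA [uB uC]] [e1 e2 e3]]; split; first by rewrite !unitmxZ ?unitfE.
split; [rewrite !scalemxM e1 | rewrite !scalemxM e2 | rewrite !scalemxM e3];
  by congr (_ *: _); ring.
Qed.

Lemma rel_Bvi_scale u A B C : u != 0 ->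
  rel_Bvi A B C -> rel_Bvi (u *: A) (u *: B) (u *: C).
Proof.
move=> u0 [[uA [uB uC]] [e1 e2 e3]]; split; first by rewrite !unitmxZ ?unitfE.
split; [rewrite !scalemxM e1 | rewrite !scalemxM e2 | rewrite !scalemxM e3];
  by congr (_ *: _); ring.
Qed.

Lemma rel_Hii_scale u A B C : u != 0 ->
  rel_Hii A B C -> rel_Hii (u *: A) (u *: B) (u *: C).
Proof.
move=> u0 [[uA [uB uC]] [e1 e2 e3]]; split; first by rewrite !unitmxZ ?unitfE.
split; [rewrite !scalemxM e1 | rewrite !scalemxM e2 | rewrite !scalemxM e3];
  by congr (_ *: _); ring.
Qed.

Lemma rel_Hiii_scale u A B C : u != 0 ->
  rel_Hiii A B C -> rel_Hiii (u *: A) (u *: B) (u *: C).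
Proof.
move=> u0 [[uA [uB uC]] [e1 e2 e3]]; split; first by rewrite !unitmxZ ?unitfE.
split; [rewrite !scalemxM e1 | rewrite !scalemxM e2 | rewrite !scalemxM e3];
  by congr (_ *: _); ring.
Qed.

Lemma nonabelian_noncomm A B C : A *m B != B *m A -> nonabelian_image A B C.
Proof.
move=> /eqP nAB; exists (1%:M *m A), (1%:M *m B).
by split; [apply/gen3_A/gen3_1 | split; [apply/gen3_B/gen3_1 | rewrite !mul1mx]].
Qed.

Lemma scale_noncomm u v X Y : u != 0 -> v != 0 ->
  X *m Y != Y *m X -> (u *: X) *m (v *: Y) != (v *: Y) *m (u *: X).
Proof.
move=> u0 v0; apply: contra; rewrite !scalemxM (mulrC v) => /eqP.
by move/(scalerI (mulf_neq0 u0 v0)) ->.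
Qed.

Lemma diag_mx2_noncomm l x y z w : l != 0 -> l ^+ 2 != 1 -> y != 0 ->
  mx2 l 0 0 l^-1 *m mx2 x y z w != mx2 x y z w *m mx2 l 0 0 l^-1.
Proof.
move=> l0 l2 y0; apply/eqP; rewrite !mx2_mul => /(congr1 (fun M : 'M[F]_2 => M 0 1)).
rewrite !mxE /= mul0r mulr0 addr0 add0r mulrC => /(mulfI y0) ll.
by move: l2; rewrite expr2 {2}ll mulfV ?eqxx.
Qed.

Lemma unity_root_neq0 {l} {n} : l ^+ n.+1 = 1 -> l != 0.
Proof.
by move=> h; apply/eqP=> l0; move: h; rewrite l0 expr0n => /eqP; rewrite eq_sym oner_eq0.
Qed.

Lemma rel_Bii_base l : l ^+ 6 = 1 ->
  rel_Bii (mx2 1 (l ^+ 2) 0 1) (mx2 l 0 0 l^-1) (mx2 1 1 0 1).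
Proof.
move=> hl6; have l0 := unity_root_neq0 hl6.
split; [split; [|split] | split].
- by apply: unitmx_SL2; rewrite det_mx2 mulr1 mulr0 subr0.
- exact/unitmx_SL2/det_diag_mx2.
- by apply: unitmx_SL2; rewrite det_mx2 mulr1 mulr0 subr0.
- apply: braid6_mx2; rewrite !mx2_mul opp_mx2 add_mx2 scale_mx2 tr_mx2 det_mx2 [RHS]mx2_0.
  congr mx2; try by field.
  have hl6' : l ^+ 6 - 1 = 0 by rewrite hl6 subrr.
  by apply: (eq_mod1 (- l^-1) hl6'); field.
- by rewrite !mx2_mul; congr mx2; field.
- by rewrite !mx2_mul; congr mx2; ring.
Qed.

Lemma Bii_representation l u v : l ^+ 6 = 1 -> u != 0 -> v != 0 ->
  let A := u *: mx2 1 (l ^+ 2) 0 1 in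
  let B := v *: mx2 l 0 0 l^-1 in
  let C := u *: mx2 1 1 0 1 in
  rel_Bii A B C /\ (l ^+ 2 != 1 -> nonabelian_image A B C).
Proof.
move=> hl6 u0 v0 A B C; split; first exact: rel_Bii_scale u0 v0 (rel_Bii_base hl6).
have l0 := unity_root_neq0 hl6.
move=> l2; apply/nonabelian_noncomm/scale_noncomm => //; rewrite eq_sym.
by apply: diag_mx2_noncomm; rewrite // expf_neq0.
Qed.

Section TenthRoot.
Variables l b1 b2 b3 b4 : F.
Hypotheses (hl10 : l ^+ 10 = 1) (l2 : l ^+ 2 != 1)
  (hb1 : b1 = - (1 / (l * (l ^+ 2 - 1))))
  (hb23 : b2 * b3 = (- l ^+ 4 + l ^+ 2 - 1) / (l ^+ 2 - 1) ^+ 2)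
  (hb4 : b4 = l ^+ 3 / (l ^+ 2 - 1)).

Let l0 : l != 0 := unity_root_neq0 hl10.

Let l21 : l ^+ 2 - 1 != 0.
Proof. by rewrite subr_eq0. Qed.

Let cyclo : l ^+ 8 + l ^+ 6 + l ^+ 4 + l ^+ 2 + 1 = 0.
Proof.
have : (l ^+ 2 - 1) * (l ^+ 8 + l ^+ 6 + l ^+ 4 + l ^+ 2 + 1) = l ^+ 10 - 1 by ring.
by rewrite hl10 subrr => /eqP; rewrite mulf_eq0 (negbTE l21) => /eqP.
Qed.

Let b20 : b2 != 0.
Proof.
apply/eqP=> b20; move: hb23; rewrite b20 mul0r => /esym/eqP.
rewrite mulf_eq0 invr_eq0 expf_eq0 (negbTE l21) andbF orbF => /eqP g0.
move/eqP: l2; apply; apply: (eq_mod2 1 (l ^+ 4 + 2 * l ^+ 2 + 2) cyclo g0).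
by ring.
Qed.

Let hb3 : b3 = (- l ^+ 4 + l ^+ 2 - 1) / (l ^+ 2 - 1) ^+ 2 / b2.
Proof. by rewrite -hb23 [b2 * b3]mulrC mulfK. Qed.

Local Notation A := (mx2 l 0 0 l^-1).
Local Notation B := (mx2 b1 b2 b3 b4).

Let dA : \det A = 1 := det_diag_mx2 l0.

Let dB : \det B = 1.
Proof. by rewrite det_mx2 hb1 hb4 hb3; field; rewrite b20 l21 l0. Qed.

Let braid_AB : A *m B *m A = B *m A *m B.
Proof.
apply: braid3_mx2 => //; first by rewrite !tr_mx2 hb1 hb4; field; rewrite l21 l0.
by rewrite mx2_mul tr_mx2 hb1 hb4; field; rewrite l21 l0.
Qed.

Lemma Bvi_representation u c1 c2 c3 c4 : u != 0 ->
  c1 = - (l ^+ 4 * b1) -> c2 = - b2 / l ^+ 4 ->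
  c3 = - (l ^+ 4 * b3) -> c4 = - b4 / l ^+ 4 ->
  let A := u *: mx2 l 0 0 l^-1 in
  let B := u *: mx2 b1 b2 b3 b4 in
  let C := u *: mx2 c1 c2 c3 c4 in
  rel_Bvi A B C /\ (l ^+ 2 != 1 -> nonabelian_image A B C).
Proof.
move=> u0 hc1 hc2 hc3 hc4 A' B' C'.
have dC : \det (mx2 c1 c2 c3 c4) = 1.
  by rewrite det_mx2 hc1 hc2 hc3 hc4 hb1 hb4 hb3; field; rewrite ?b20 ?l21 ?l0.
have tC : \tr A = \tr (mx2 c1 c2 c3 c4).
  by rewrite !tr_mx2 hc1 hc4 hb1 hb4; field; rewrite ?l21 ?l0.
have sqC : B *m (A *m A) *m mx2 c1 c2 c3 c4 = A *m A.
  by rewrite !mx2_mul hc1 hc2 hc3 hc4 hb1 hb4 hb3; congr mx2; field; rewrite ?b20 ?l21 ?l0.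
have golden : \tr (A *m mx2 c1 c2 c3 c4) ^+ 2 - \tr (A *m mx2 c1 c2 c3 c4) - 1 = 0.
  rewrite mx2_mul tr_mx2 hc1 hc4 hb1 hb4.
  by apply: (eq_mod1 (1 / l ^+ 4) cyclo); field; rewrite ?l21 ?l0.
split.
  apply: rel_Bvi_scale => //; split; first by rewrite !unitmx_SL2.
  split; [exact: braid_AB | | exact: braid5_mx2].
  by apply: invsqconj_aca => //; rewrite unitmx_mul !unitmx_SL2.
move=> _; apply/nonabelian_noncomm/scale_noncomm => //.
exact: diag_mx2_noncomm.
Qed.

Lemma Hiii_representation u c1 c2 c3 c4 : u != 0 ->
  c1 = b1 -> c2 = b2 / l ^+ 4 -> c3 = l ^+ 4 * b3 -> c4 = b4 ->
  let A := u *: mx2 l 0 0 l^-1 in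
  let B := u *: mx2 b1 b2 b3 b4 in
  let C := u *: mx2 c1 c2 c3 c4 in
  rel_Hiii A B C /\ (l ^+ 2 != 1 -> nonabelian_image A B C).
Proof.
move=> u0 hc1 hc2 hc3 hc4 A' B' C'.
have dC : \det (mx2 c1 c2 c3 c4) = 1.
  by rewrite det_mx2 hc1 hc2 hc3 hc4 hb1 hb4 hb3; field; rewrite ?b20 ?l21 ?l0.
have sqC : A *m A *m mx2 c1 c2 c3 c4 = B *m A *m A.
  by rewrite !mx2_mul hc1 hc2 hc3 hc4; congr mx2; field.
have A5 : A ^+ 5 = (l ^+ 5)%:M.
  rewrite expmx2_diag scalar_mx2 exprVn; congr mx2.
  by apply: (mulfI (expf_neq0 5 l0)); rewrite mulfV ?expf_neq0 // -exprD hl10.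
have a5B : A ^+ 5 * B = B * A ^+ 5 by rewrite A5 -!mulmxE scalar_mxC.
split.
  apply: rel_Hiii_scale => //; split; first by rewrite !unitmx_SL2.
  have uA : A \in unitmx := unitmx_SL2 dA.
  split; [exact: braid_AB | exact: sqconj_bcba braid_AB uA sqC a5B |].
  exact: sqconj_cba braid_AB uA sqC.
move=> _; apply/nonabelian_noncomm/scale_noncomm => //.
exact: diag_mx2_noncomm.
Qed.

End TenthRoot.

End Representations.

Section CubeRoot.
Variable F : numFieldType.
Variables l b1 b2 b3 b4 c1 c2 c3 c4 : F.
Hypotheses (hl : l ^+ 2 + l + 1 = 0) (hc : 3 * c1 ^+ 2 + 3 * c1 + 2 = 0)
  (hb1 : b1 = (l - 1) / 3) (hb4 : b4 = (- l - 2) / 3) (hb23 : b2 * b3 = - (2 / 3))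
  (hc2 : c2 = - b2 * (l + 2) / (3 * c1)) (hc3 : c3 = c1 * (1 - l) / (3 * b2))
  (hc4 : c4 = 2 / (3 * c1)).

Let l0 : l != 0.
Proof.
by apply/eqP=> l0; move: hl; rewrite l0 expr0n /= !add0r => /eqP; rewrite oner_eq0.
Qed.

Let c10 : c1 != 0.
Proof.
apply/eqP=> c10; move: hc; rewrite c10 expr0n /= !mulr0 !add0r => /eqP.
by rewrite pnatr_eq0.
Qed.

Let b20 : b2 != 0.
Proof.
apply/eqP=> b20; move: hb23; rewrite b20 mul0r => /eqP.
by rewrite eq_sym oppr_eq0 mulf_eq0 invr_eq0 !pnatr_eq0.
Qed.

Let hb3 : b3 = - (2 / 3) / b2.
Proof. by rewrite -hb23 [b2 * b3]mulrC mulfK. Qed.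

Local Notation A := (mx2 l 0 0 l^-1).
Local Notation B := (mx2 b1 b2 b3 b4).
Local Notation C := (mx2 c1 c2 c3 c4).

Lemma Hii_representation u : u != 0 ->
  let A := u *: mx2 l 0 0 l^-1 in
  let B := u *: mx2 b1 b2 b3 b4 in
  let C := u *: mx2 c1 c2 c3 c4 in
  rel_Hii A B C /\ (l ^+ 2 != 1 -> nonabelian_image A B C).
Proof.
move=> u0 A' B' C'.
have dA : \det A = 1 := det_diag_mx2 l0.
have dB : \det B = 1.
  rewrite det_mx2 hb1 hb4 hb3; apply: (eq_mod1 (- (1 / 9)) hl).
  by field; rewrite ?b20 ?pnatr_eq0.
have dC : \det C = 1.
  rewrite det_mx2 hc2 hc3 hc4; apply: (eq_mod1 (- (1 / 9)) hl).
  by field; rewrite ?b20 ?c10 ?pnatr_eq0.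
have tAC : \tr A = \tr C.
  rewrite !tr_mx2 hc4; apply: (eq_mod2 (1 / l) (- (1 / (3 * c1))) hl hc).
  by field; rewrite ?l0 ?c10 ?pnatr_eq0.
have tAB : \tr (A *m B) = 0.
  rewrite mx2_mul tr_mx2 hb1 hb4; apply: (eq_mod1 (1 / 3 - 2 / (3 * l)) hl).
  by field; rewrite ?l0 ?pnatr_eq0.
have golden : \tr (A *m C) ^+ 2 - \tr (A *m C) - 1 = 0.
  rewrite mx2_mul tr_mx2 hc4.
  apply: (eq_mod2
    (c1 ^+ 2 - c1 ^+ 2 / l - c1 / l + c1 / l ^+ 2 + 1 / (3 * l ^+ 2))
    (1 / (3 * l) - 1 / (3 * l * c1) - 1 / (3 * l ^+ 2 * c1) + 2 / (9 * l ^+ 2 * c1 ^+ 2))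
    hl hc).
  by field; rewrite ?l0 ?c10 ?pnatr_eq0.
have ACA : A *m C *m A = B *m A *m C.
  rewrite !mx2_mul hb1 hb4 hb3 hc2 hc3 hc4; congr mx2.
  - apply: (eq_mod1 (2 / 3 * c1 - c1 / (3 * l)) hl).
    by field; rewrite ?l0 ?c10 ?b20 ?pnatr_eq0.
  - apply: (eq_mod1 (l * b2 / (9 * c1) - 2 * b2 / (3 * l * c1)) hl).
    by field; rewrite ?l0 ?c10 ?b20 ?pnatr_eq0.
  - apply: (eq_mod1 (2 * c1 / (9 * l * b2)) hl).
    by field; rewrite ?l0 ?c10 ?b20 ?pnatr_eq0.
  - apply: (eq_mod1
      (- (2 / (9 * c1)) - 2 / (9 * l * c1) + 2 / (3 * l ^+ 2 * c1)) hl).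
    by field; rewrite ?l0 ?c10 ?b20 ?pnatr_eq0.
split.
  apply: rel_Hii_scale => //; split; first by rewrite !unitmx_SL2.
  by split; [exact: braid4_mx2 | exact: ACA | exact: braid5_mx2].
move=> l2; apply/nonabelian_noncomm/scale_noncomm => //.
exact: diag_mx2_noncomm.
Qed.

End CubeRoot.

(* Case (ii) of H_ii is case (i) for -l, -u and all matrix entries negated. *)
Lemma Hii_representation_opp (F : numFieldType) (l b1 b2 b3 b4 c1 c2 c3 c4 u : F) :
  u != 0 -> l ^+ 2 - l + 1 = 0 -> 3 * c1 ^+ 2 - 3 * c1 + 2 = 0 ->
  b1 = (l + 1) / 3 -> b4 = (- l + 2) / 3 -> b2 * b3 = - (2 / 3) ->
  c2 = b2 * (- l + 2) / (3 * c1) -> c3 = - c1 * (l + 1) / (3 * b2) ->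
  c4 = 2 / (3 * c1) ->
  let A := u *: mx2 l 0 0 l^-1 in
  let B := u *: mx2 b1 b2 b3 b4 in
  let C := u *: mx2 c1 c2 c3 c4 in
  rel_Hii A B C /\ (l ^+ 2 != 1 -> nonabelian_image A B C).
Proof.
move=> u0 hl hc hb1 hb4 hb23 hc2 hc3 hc4 A B C.
have opp_scale (X : 'M[F]_2) : u *: X = (- u) *: (- X) by rewrite scalerN scaleNr opprK.
rewrite /A /B /C !(opp_scale (mx2 _ _ _ _)) !opp_mx2 oppr0 -invrN -(sqrrN l).
apply: Hii_representation; rewrite ?oppr_eq0 ?sqrrN ?mulrNN ?mulrN ?invrN //.
- by rewrite hb1 -mulNr opprD.
- by rewrite hb4 -mulNr opprD.
- by rewrite hc2 opprK mulrN.
- by rewrite hc3 opprK mulrN (addrC 1).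
- by rewrite hc4 mulrN.
Qed.

Theorem theorem5 (R : realType) :
  (forall (l u v : R[i]),
     l ^+ 6 = 1 -> u != 0 -> v != 0 ->
     let A := u *: mx2 1 (l ^+ 2) 0 1 in
     let B := v *: mx2 l 0 0 l^-1 in
     let C := u *: mx2 1 1 0 1 in
     rel_Bii A B C /\ (l ^+ 2 != 1 -> nonabelian_image A B C))
  /\
  (forall (l u b1 b2 b3 b4 c1 c2 c3 c4 : R[i]),
     l ^+ 10 = 1 -> l ^+ 2 != 1 -> u != 0 ->
     b1 = - (1 / (l * (l ^+ 2 - 1))) ->
     b2 * b3 = (- l ^+ 4 + l ^+ 2 - 1) / (1 - l ^+ 2) ^+ 2 ->
     b4 = l ^+ 3 / (l ^+ 2 - 1) ->
     c1 = - (l ^+ 4 * b1) -> c2 = - b2 / l ^+ 4 ->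
     c3 = - (l ^+ 4 * b3) -> c4 = - b4 / l ^+ 4 ->
     let A := u *: mx2 l 0 0 l^-1 in
     let B := u *: mx2 b1 b2 b3 b4 in
     let C := u *: mx2 c1 c2 c3 c4 in
     rel_Bvi A B C /\ (l ^+ 2 != 1 -> nonabelian_image A B C))
  /\
  (forall (l u b1 b2 b3 b4 c1 c2 c3 c4 : R[i]),
     u != 0 ->
     ((l ^+ 2 + l + 1 = 0 /\ 3 * c1 ^+ 2 + 3 * c1 + 2 = 0 /\
       b1 = (l - 1) / 3 /\ b4 = (- l - 2) / 3 /\ b2 * b3 = - (2 / 3) /\
       c2 = - b2 * (l + 2) / (3 * c1) /\ c3 = c1 * (1 - l) / (3 * b2) /\
       c4 = 2 / (3 * c1))
      \/
      (l ^+ 2 - l + 1 = 0 /\ 3 * c1 ^+ 2 - 3 * c1 + 2 = 0 /\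
       b1 = (l + 1) / 3 /\ b4 = (- l + 2) / 3 /\ b2 * b3 = - (2 / 3) /\
       c2 = b2 * (- l + 2) / (3 * c1) /\ c3 = - c1 * (l + 1) / (3 * b2) /\
       c4 = 2 / (3 * c1))) ->
     let A := u *: mx2 l 0 0 l^-1 in
     let B := u *: mx2 b1 b2 b3 b4 in
     let C := u *: mx2 c1 c2 c3 c4 in
     rel_Hii A B C /\ (l ^+ 2 != 1 -> nonabelian_image A B C))
  /\
  (forall (l u b1 b2 b3 b4 c1 c2 c3 c4 : R[i]),
     l ^+ 10 = 1 -> l ^+ 2 != 1 -> u != 0 ->
     b1 = - (1 / (l * (l ^+ 2 - 1))) ->
     b2 * b3 = (- l ^+ 4 + l ^+ 2 - 1) / (l ^+ 2 - 1) ^+ 2 ->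
     b4 = l ^+ 3 / (l ^+ 2 - 1) ->
     c1 = b1 -> c2 = b2 / l ^+ 4 -> c3 = l ^+ 4 * b3 -> c4 = b4 ->
     let A := u *: mx2 l 0 0 l^-1 in
     let B := u *: mx2 b1 b2 b3 b4 in
     let C := u *: mx2 c1 c2 c3 c4 in
     rel_Hiii A B C /\ (l ^+ 2 != 1 -> nonabelian_image A B C)).
Proof.
split; [exact: Bii_representation | split; [|split]].
- move=> l u b1 b2 b3 b4 c1 c2 c3 c4 hl10 l2 u0 hb1 hb23 hb4.
  apply: (Bvi_representation hl10 l2 hb1 _ hb4 u0).
  by rewrite hb23 -[1 - l ^+ 2]opprB sqrrN.
- move=> l u b1 b2 b3 b4 c1 c2 c3 c4 u0 [] [hl [hc [hb1 [hb4 [hb23 [hc2 [hc3 hc4]]]]]]].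
  + exact: Hii_representation.
  + exact: Hii_representation_opp.
- move=> l u b1 b2 b3 b4 c1 c2 c3 c4 hl10 l2 u0 hb1 hb23 hb4.
  exact: (Hiii_representation hl10 l2 hb1 hb23 hb4 u0).
Qed.
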